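(* Let $n\ge 6$, let $D\subseteq[n]\setminus\{1,2,3,4\}$ with $|D|\ge2$, and let $H_2$ be the $3$-graph on $[n]$ with edge set $\big(E(B(2,n-2))\setminus\{2ij:i,j\in D\}\big)\cup\{34i: i\in D\}$. Then $\lambda(H_2)\le\frac{\sqrt3}{18}$.
   Context: $B(2,n-2)$ is the $3$-graph on $[n]$ whose edge set is $\{e\in\binom{[n]}3: e\cap\{1,2\}\neq\emptyset\}$. For a $3$-graph $G$ on $[n]$, $\lambda(G)=\max\{\sum_{e\in E(G)}\prod_{i\in e}x_i:\sum_i x_i=1,x_i\ge0\}$. *)

(* Vertex set [n] = {1,...,n} is modelled by 'I_n,
   vertex i : 'I_n carries the label lab i = i + 1. *)
From HB Require Import structures.
From mathcomp Require Import all_boot all_order all_algebra.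
Set Implicit Arguments. Unset Strict Implicit. Unset Printing Implicit Defensive.
Import Order.TTheory GRing.Theory Num.Theory.
Local Open Scope ring_scope.

Definition lab (n : nat) (i : 'I_n) : nat := (val i).+1.


Definition B2 (n : nat) : {set {set 'I_n}} :=
  [set e : {set 'I_n} | (#|e| == 3)%N &&
     [exists i in e, (lab i == 1)%N || (lab i == 2)%N]].

Definition H2 (n : nat) (D : {set 'I_n}) : {set {set 'I_n}} :=
  [set e : {set 'I_n} |
     ((e \in B2 n) &&
       ~~ [exists v : 'I_n, exists i in D, exists j in D,
             [&& (lab v == 2)%N, i != j & e == [set v; i; j]]])
  || [exists u : 'I_n, exists w : 'I_n, exists i in D,
             [&& (lab u == 3)%N, (lab w == 4)%N & e == [set u; w; i]]]].

Definition lagr_val (R : numDomainType) n (G : {set {set 'I_n}}) (x : 'I_n -> R) : R :=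
  \sum_(e in G) \prod_(i in e) x i.

Definition in_simplex (R : numDomainType) n (x : 'I_n -> R) : Prop :=
  (forall i, 0 <= x i) /\ \sum_i x i = 1.

From HB Require Import structures.
From mathcomp Require Import all_boot all_order all_algebra.
From mathcomp Require Import ring lra zify.
Set Implicit Arguments. Unset Strict Implicit. Unset Printing Implicit Defensive.
Import Order.TTheory GRing.Theory Num.Theory.
Local Open Scope ring_scope.

(* Write a, b for the weights of the vertices 1, 2, u, v for those of 3, 4,
   d for the weight of D and S = 1 - a - b. An edge of H_2 contains 1, or
   contains 2 but not two vertices of D, or is 34i with i in D; summing the
   edges through pair sums and dropping squares bounds the Lagrangian by
     abS + (a+b)S^2/2 - (a+b)(u^2+v^2)/2 - bd^2/2 + uvd.
   If d <= a + b the term uvd is absorbed and AM-GM leaves t(1-t)(1-2t) with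
   t = (a+b)/2, whose maximum on [0, 1/2] is sqrt 3 / 18. Otherwise,
   maximising in b and then in u + v leaves a quartic in a + b, and the bound
   is at most 9/100 < sqrt 3 / 18. *)

Lemma sqrt3_facts (R : rcfType) : 0 <= Num.sqrt (3 : R) /\ Num.sqrt (3 : R) ^+ 2 = 3.
Proof. by rewrite sqrtr_ge0 sqr_sqrtr. Qed.

Lemma cubic_le_sqrt3_div18 (R : rcfType) (t : R) : 0 <= t -> t <= 1/2 ->
  t * (1 - t) * (1 - 2 * t) <= Num.sqrt 3 / 18.
Proof.
move=> t_ge0 t_le; have [c_ge0 c_sqr] := sqrt3_facts R.
set c := Num.sqrt 3 in c_ge0 c_sqr *.
(* The maximum on [0, 1/2] is at t = (3 - c)/6, a double root of the gap. *)
have : 0 <= (t - (3 - c) / 6) ^+ 2 * (1/2 + c/3 - t).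
  by apply: mulr_ge0; [exact: sqr_ge0 | nra].
have c_cube : c ^+ 3 = 3 * c by rewrite exprS c_sqr mulrC.
nra.
Qed.

Lemma two_heavy_vertices_bound (R : rcfType) (a b S : R) :
  0 <= a -> 0 <= b -> 0 <= S -> a + b + S = 1 ->
  a * b * S + (a + b) * S ^+ 2 / 2 <= Num.sqrt 3 / 18.
Proof.
move=> a_ge0 b_ge0 S_ge0 sum1.
apply: le_trans (@cubic_le_sqrt3_div18 R ((a + b) / 2) _ _); [|lra|lra].
have : a * b <= (a + b) ^+ 2 / 4 by have := sqr_ge0 (a - b); nra.
have -> : S = 1 - a - b by lra.
nra.
Qed.

Lemma quartic_ge0 (R : realFieldType) (s : R) : 0 <= s -> s <= 1/2 ->
  0 <= 143/675 - 893/675 * s + 7/3 * s ^+ 2 - 1/27 * s ^+ 3 - 155/108 * s ^+ 4.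
Proof.
move=> s_ge0 s_le.
have h : 0 <= s * (1/2 - s) by nra.
have : 0 <= s * (1/2 - s) * (s - 1/3) ^+ 2 by apply: mulr_ge0; [nra | exact: sqr_ge0].
have : 0 <= s ^+ 2 * (1/2 - s) by nra.
have : 0 <= s * (1/2 - s) ^+ 2 by nra.
nra.
Qed.

Lemma heavy_D_bound (R : realFieldType) (a b p d S : R) :
  0 <= a -> 0 <= b -> 0 <= p -> 0 <= d -> p + d <= S -> a + b + S = 1 ->
  a + b <= d ->
  a * b * S + (a + b) * S ^+ 2 / 2 - (a + b) * p ^+ 2 / 4 - b * d ^+ 2 / 2
    + p ^+ 2 * d / 4 <= 9/100.
Proof.
move=> a_ge0 b_ge0 p_ge0 d_ge0 pd_le sum1 s_le_d.
set s := a + b in sum1 s_le_d *.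
have a_def : a = s - b by rewrite /s; ring.
clearbody s; subst a.
have S_gt0 : 0 < S by lra.
set K := s * S - s ^+ 2 / 2.
(* Maximise in b first (a concave quadratic with vertex at b = K / (2S)),
   then in p by AM-GM on p/2, p/2, d - s. *)
have b_part : (s - b) * b * S - b * d ^+ 2 / 2 <= K ^+ 2 / (4 * S).
  rewrite ler_pdivlMr; last by nra.
  have : b * s ^+ 2 <= b * d ^+ 2.
    by apply: ler_wpM2l => //; apply: lerXn2r; rewrite ?nnegrE; lra.
  have := sqr_ge0 (K - 2 * b * S); rewrite /K; nra.
have amgm : 27 * (p / 2) ^+ 2 * (d - s) <= (2 * (p / 2) + (d - s)) ^+ 3.
  have : 0 <= (p / 2 - (d - s)) ^+ 2 * (8 * (p / 2) + (d - s)).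
    by apply: mulr_ge0; [exact: sqr_ge0 | lra].
  nra.
have K_part : K ^+ 2 / (4 * S) <= 9/100 - s * S ^+ 2 / 2 - (1 - 2 * s) ^+ 3 / 27.
  rewrite ler_pdivrMr; last by nra.
  have := @quartic_ge0 _ s ltac:(lra) ltac:(lra).
  rewrite /K; have -> : S = 1 - s by lra.
  nra.
have : (2 * (p / 2) + (d - s)) ^+ 3 <= (1 - 2 * s) ^+ 3.
  by apply: lerXn2r; rewrite ?nnegrE; nra.
nra.
Qed.

Lemma reduced_lagrangian_bound (R : rcfType) (a b u v d S : R) :
  0 <= a -> 0 <= b -> 0 <= u -> 0 <= v -> 0 <= d -> u + v + d <= S ->
  a + b + S = 1 ->
  a * b * S + (a + b) * S ^+ 2 / 2 - (a + b) * (u ^+ 2 + v ^+ 2) / 2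
    - b * d ^+ 2 / 2 + u * v * d <= Num.sqrt 3 / 18.
Proof.
move=> a_ge0 b_ge0 u_ge0 v_ge0 d_ge0 uvd_le sum1.
have uv_le : u * v <= (u ^+ 2 + v ^+ 2) / 2 by have := sqr_ge0 (u - v); nra.
have [d_le | s_lt_d] := lerP d (a + b).
- have : u * v * d <= (a + b) * (u ^+ 2 + v ^+ 2) / 2.
    apply: le_trans (_ : (u ^+ 2 + v ^+ 2) / 2 * d <= _); first exact: ler_wpM2r.
    have : 0 <= (u ^+ 2 + v ^+ 2) * (a + b - d).
      by apply: mulr_ge0; [exact: addr_ge0 (sqr_ge0 u) (sqr_ge0 v) | lra].
    nra.
  have := mulr_ge0 b_ge0 (sqr_ge0 d).
  have := @two_heavy_vertices_bound R a b S a_ge0 b_ge0 ltac:(lra) sum1; lra.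
- have := @heavy_D_bound R a b (u + v) d S a_ge0 b_ge0 (addr_ge0 u_ge0 v_ge0)
    d_ge0 uvd_le sum1 (ltW s_lt_d).
  have : u * v * d <= (u + v) ^+ 2 * d / 4.
    rewrite [X in _ <= X]mulrAC; apply: ler_wpM2r => //.
    have := sqr_ge0 (u - v); nra.
  have : (a + b) * (u + v) ^+ 2 / 4 <= (a + b) * (u ^+ 2 + v ^+ 2) / 2.
    rewrite -!mulrA; apply: ler_wpM2l; first lra.
    have := sqr_ge0 (u - v); nra.
  have [c_ge0 c_sqr] := sqrt3_facts R.
  have : 9/100 <= Num.sqrt (3 : R) / 18 by nra.
  lra.
Qed.

Lemma H2_weights_bound (R : rcfType) (a b u v d S Z4 ZD e1 e2 eD : R) :
  0 <= a -> 0 <= b -> 0 <= u -> 0 <= v -> 0 <= d -> ZD <= Z4 -> 0 <= ZD ->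
  u + v + d <= S -> a + b + S = 1 ->
  2 * e1 = (b + S) ^+ 2 - (b ^+ 2 + (u ^+ 2 + (v ^+ 2 + Z4))) ->
  2 * e2 = S ^+ 2 - (u ^+ 2 + (v ^+ 2 + Z4)) -> 2 * eD = d ^+ 2 - ZD ->
  a * e1 + b * (e2 - eD) + u * v * d <= Num.sqrt 3 / 18.
Proof.
move=> a_ge0 b_ge0 u_ge0 v_ge0 d_ge0 ZD_le ZD_ge0 uvd_le sum1 e1E e2E eDE.
have := reduced_lagrangian_bound a_ge0 b_ge0 u_ge0 v_ge0 d_ge0 uvd_le sum1.
have : 0 <= a * Z4 by apply: mulr_ge0 => //; lra.
have : 0 <= b * (Z4 - ZD) by apply: mulr_ge0 => //; lra.
nra.
Qed.

Lemma ler_sum_cover (R : numDomainType) (I J : finType) (f : I -> J)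
    (A : {pred I}) (B : {pred J}) (G : J -> R) :
  (forall y, 0 <= G y) -> {subset B <= [seq f x | x in A]} ->
  \sum_(y in B) G y <= \sum_(x in A) G (f x).
Proof.
move=> G_ge0 B_cover.
rewrite [X in _ <= X](partition_big f predT) //= [X in _ <= X](bigID (mem B)) /=.
apply: le_trans (_ : _ <= \sum_(y in B) \sum_(x in A | f x == y) G (f x)) _.
  apply: ler_sum => y /B_cover /imageP[x xA ->].
  by rewrite (bigD1 x) ?xA ?eqxx //= lerDl sumr_ge0.
by rewrite lerDl sumr_ge0 // => y _; rewrite sumr_ge0.
Qed.

Lemma card3_sorted d (T : finOrderType d) (e : {set T}) : #|e| = 3%N ->
  exists i j k, [/\ (i < j)%O, (j < k)%O & e = [set i; j; k]].
Proof.
move=> card_e; set s := sort <=%O (enum e).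
have s_sorted : sorted <%O s by rewrite sort_lt_sorted enum_uniq.
have s_size : size s = 3%N by rewrite size_sort -cardE.
have s_e : e = [set x in s] by apply/setP => x; rewrite inE mem_sort mem_enum.
move: s_sorted s_size s_e; case: s => [|i [|j [|k []]]] //= /and3P[ij jk _] _ ->.
by exists i, j, k; split => //; apply/setP => x; rewrite !inE orbA.
Qed.

Lemma ler_sum_subset (R : numDomainType) (I : finType) (P Q : pred I) (F : I -> R) :
  (forall i, 0 <= F i) -> {subset P <= Q} -> \sum_(i | P i) F i <= \sum_(i | Q i) F i.
Proof.
move=> F_ge0 PQ; rewrite [leLHS]big_mkcond [leRHS]big_mkcond.
apply: ler_sum => i _; case Pi: (P i); last by case: ifP.
by have -> : Q i := PQ i Pi.
Qed.

Lemma sum_from_split (R : nmodType) n (F : 'I_n -> R) (m : nat) (i : 'I_n) :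
  i = m :> nat ->
  \sum_(j : 'I_n | (m <= j)%N) F j = F i + \sum_(j : 'I_n | (m < j)%N) F j.
Proof.
move=> iE; rewrite (bigD1 i) /= ?iE //; congr (_ + _); apply: eq_bigl => j.
by rewrite ltn_neqAle andbC -val_eqE /= iE eq_sym.
Qed.

Section PairSums.
Variables (d : Order.disp_t) (T : finOrderType d) (R : numDomainType) (x : T -> R).

Definition restr (P : pred T) (j : T) : R := if P j then x j else 0.

Definition pair_term (P : pred T) (j k : T) : R :=
  if (j < k)%O then restr P j * restr P k else 0.

Definition pair_sum (P : pred T) : R := \sum_j \sum_k pair_term P j k.

Lemma sum_restr (P : pred T) : \sum_j restr P j = \sum_(j | P j) x j.
Proof. by rewrite [RHS]big_mkcond. Qed.

Lemma pair_sum_sqr (P : pred T) :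
  2 * pair_sum P = (\sum_(j | P j) x j) ^+ 2 - \sum_(j | P j) x j ^+ 2.
Proof.
have sum_sqrE : \sum_(j | P j) x j ^+ 2 = \sum_j restr P j ^+ 2.
  by rewrite big_mkcond; apply: eq_bigr => j _; rewrite /restr; case: (P j); rewrite ?expr0n.
have sqr_split :
    (\sum_j restr P j) ^+ 2 = pair_sum P + \sum_j restr P j ^+ 2 + pair_sum P.
  rewrite expr2 big_distrlr /= /pair_sum [in X in _ = _ + X]exchange_big.
  rewrite -!big_split; apply: eq_bigr => j _ /=.
  have -> : restr P j ^+ 2 = \sum_k (if k == j then restr P j * restr P k else 0).
    by rewrite -big_mkcond big_pred1_eq expr2.
  rewrite -!big_split; apply: eq_bigr => k _ /=; rewrite /pair_term.
  case: (ltgtP j k) => [jk|kj|->]; rewrite ?eqxx ?(gt_eqF jk) ?(lt_eqF kj) /=.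
  - by rewrite !addr0.
  - by rewrite !add0r mulrC.
  - by rewrite add0r addr0.
by rewrite -sum_restr sum_sqrE sqr_split; ring.
Qed.

Hypothesis x_ge0 : forall j, 0 <= x j.

Lemma restr_ge0 (P : pred T) j : 0 <= restr P j.
Proof. by rewrite /restr; case: ifP. Qed.

Lemma pair_term_ge0 (P : pred T) j k : 0 <= pair_term P j k.
Proof. by rewrite /pair_term; case: ifP => // _; rewrite mulr_ge0 ?restr_ge0. Qed.

Lemma pair_term_le (P Q : pred T) j k :
  {subset P <= Q} -> pair_term P j k <= pair_term Q j k.
Proof.
move=> PQ; have restr_le l : restr P l <= restr Q l.
  rewrite /restr; case Pl: (P l); last exact: restr_ge0.
  by have -> : Q l := PQ l Pl.
rewrite /pair_term; case: ifP => // _.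
by apply: ler_pM; rewrite ?restr_ge0.
Qed.

End PairSums.

Lemma prod_set3 (R : comPzSemiRingType) (T : finType) (x : T -> R) (i j k : T) :
  i != j -> i != k -> j != k -> \prod_(l in [set i; j; k]) x l = x i * x j * x k.
Proof.
move=> ij ik jk; rewrite -setUA big_setU1 /=; last by rewrite !inE negb_or ij ik.
by rewrite big_setU1 /= ?inE // big_set1 mulrA.
Qed.

Lemma mem_set3_val n (a b c w : 'I_n) : w \in [set a; b; c] ->
  [\/ w = a :> nat, w = b :> nat | w = c :> nat].
Proof.
by rewrite !inE -orbA => /or3P[] /eqP ->; [constructor 1 | constructor 2 | constructor 3].
Qed.

Lemma labE n (i : 'I_n) : lab i = i.+1.
Proof. by []. Qed.

Section H2Edges.
Variables (n : nat) (D : {set 'I_n}).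
Hypothesis D_ge4 : forall i, i \in D -> (4 <= i)%N.

Lemma H2_edge_sorted e : e \in H2 D ->
  exists i j k : 'I_n, [/\ (i < j)%O, (j < k)%O & e = [set i; j; k]].
Proof.
rewrite inE => /orP[/andP[] | /existsP[u /existsP[w /existsP[l /and4P[lD u3 w4 /eqP ->]]]]].
- by rewrite inE => /andP[/eqP /card3_sorted].
- exists u, w, l; split => //; rewrite ltEord /=.
  + by move: u3 w4; rewrite !labE => /eqP[->] /eqP[->].
  + by move: w4 (D_ge4 lD); rewrite labE => /eqP[->].
Qed.

Lemma H2_sorted_edgeP (i j k : 'I_n) : (i < j)%O -> (j < k)%O ->
  [set i; j; k] \in H2 D ->
  [\/ i = 0 :> nat, i = 1 :> nat /\ ~~ ((j \in D) && (k \in D))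
    | [/\ i = 2 :> nat, j = 3 :> nat & k \in D]].
Proof.
rewrite !ltEord /= => ij jk; rewrite inE => /orP[/andP[inB not2D] | in34D].
- move: inB; rewrite inE => /andP[_ /existsP[w /andP[wijk w12]]].
  have w_le1 : (w <= 1)%N by move: w12; rewrite !labE => /orP[] /eqP; lia.
  have i_le1 : (i <= 1)%N by case: (mem_set3_val wijk) => e; lia.
  have [i0 | i1] : i = 0 :> nat \/ i = 1 :> nat by lia.
    by constructor 1.
  constructor 2; split=> //; apply: contra not2D => /andP[jD kD].
  apply/existsP; exists i; apply/existsP; exists j; rewrite jD /=.
  apply/existsP; exists k; rewrite kD labE i1 !eqxx andbT /=.
  by apply/eqP => e; move: jk; rewrite e ltnn.
- case/existsP: in34D => u /existsP[w /existsP[l /and4P[lD u3 w4 /eqP e]]].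
  move: u3 w4; rewrite !labE => /eqP[u2] /eqP[w3]; have l_ge4 := D_ge4 lD.
  have : i \in [set u; w; l] by rewrite -e !inE eqxx.
  have : j \in [set u; w; l] by rewrite -e !inE eqxx orbT.
  have : k \in [set u; w; l] by rewrite -e !inE eqxx !orbT.
  move=> /mem_set3_val mk /mem_set3_val mj /mem_set3_val mi.
  have kl : k = l by apply: ord_inj; case: mi; case: mj; case: mk; lia.
  constructor 3; split; last by rewrite kl.
  all: by case: mi; case: mj; case: mk; lia.
Qed.

End H2Edges.

Section H2Weight.
Variables (R : numDomainType) (n : nat) (D : {set 'I_n}) (x : 'I_n -> R).
Hypotheses (D_ge4 : forall i, i \in D -> (4 <= i)%N) (x_ge0 : forall i, 0 <= x i).

(* x i * x j * x k restricted to the sorted edges of H_2, written in product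
   form so that the sum over all triples factors into pair sums. *)
Definition H2_weight (i j k : 'I_n) : R :=
  restr x (fun l => l == 0 :> nat) i * pair_term x (fun l => 1 <= l)%N j k
  + restr x (fun l => l == 1 :> nat) i *
      (pair_term x (fun l => 2 <= l)%N j k - pair_term x (fun l => l \in D) j k)
  + restr x (fun l => l == 2 :> nat) i * restr x (fun l => l == 3 :> nat) j
      * restr x (fun l => l \in D) k.

Lemma H2_weight_ge0 i j k : 0 <= H2_weight i j k.
Proof.
have D_ge2 : {subset (fun l => l \in D) <= (fun l : 'I_n => 2 <= l)%N}.
  by move=> l /D_ge4 /=; lia.
rewrite /H2_weight; apply: addr_ge0; first apply: addr_ge0.
- by rewrite mulr_ge0 ?restr_ge0 ?pair_term_ge0.
- by rewrite mulr_ge0 ?restr_ge0 // subr_ge0 pair_term_le.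
- by rewrite !mulr_ge0 ?restr_ge0.
Qed.

Lemma H2_weight_edge i j k : (i < j)%O -> (j < k)%O -> [set i; j; k] \in H2 D ->
  H2_weight i j k = x i * x j * x k.
Proof.
move=> ij jk edge; move: (ij) (jk); rewrite !ltEord /= => ij' jk'.
rewrite /H2_weight /pair_term jk /restr.
case: (H2_sorted_edgeP D_ge4 ij jk edge) => [i0 | [i1 notD] | [i2 j3 kD]].
- have [j1 k1] : (0 < j)%N /\ (0 < k)%N by lia.
  by rewrite i0 j1 k1 /= !mul0r !addr0 mulrA.
- have [j2 k2] : (1 < j)%N /\ (1 < k)%N by lia.
  rewrite i1 j2 k2 /= !mul0r add0r addr0 -mulrA.
  by case/nandP: notD => /negbTE ->; rewrite ?mul0r ?mulr0 subr0.
- by rewrite i2 j3 kD /= !mul0r !add0r.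
Qed.

Lemma lagr_H2_le_weights :
  lagr_val (H2 D) x <= \sum_i \sum_j \sum_k H2_weight i j k.
Proof.
pose f (t : 'I_n * 'I_n * 'I_n) := [set t.1.1; t.1.2; t.2].
pose sorted_edge := [pred t : 'I_n * 'I_n * 'I_n |
  [&& (t.1.1 < t.1.2)%O, (t.1.2 < t.2)%O & f t \in H2 D]].
have cover : {subset H2 D <= [seq f t | t in sorted_edge]}.
  move=> e e_H2; have [i [j [k [ij jk e_ijk]]]] := H2_edge_sorted D_ge4 e_H2.
  by apply/imageP; exists (i, j, k); rewrite // inE /= ij jk /f /= -e_ijk.
apply: le_trans (ler_sum_cover _ cover) _.
  by move=> e; apply: prodr_ge0 => l _.
rewrite pair_big /= pair_big /=.
apply: le_trans (_ : _ <= \sum_(t in sorted_edge) H2_weight t.1.1 t.1.2 t.2) _.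
  apply: ler_sum => -[[i j] k] /and3P[/= ij jk edge].
  rewrite H2_weight_edge // prod_set3 //.
  - by rewrite lt_eqF.
  - by rewrite lt_eqF // (lt_trans ij jk).
  - by rewrite lt_eqF.
rewrite [X in _ <= X](bigID [in sorted_edge]) /= lerDl.
by apply: sumr_ge0 => t _; apply: H2_weight_ge0.
Qed.

Lemma sum_restr_at (m : nat) (i : 'I_n) : i = m :> nat ->
  \sum_j restr x (fun l => l == m :> nat) j = x i.
Proof.
move=> iE; rewrite sum_restr (big_pred1 i) // => j /=.
by rewrite -iE; apply/eqP/eqP => [/ord_inj | ->].
Qed.

Variables (i0 i1 i2 i3 : 'I_n).
Hypotheses (i0E : i0 = 0 :> nat) (i1E : i1 = 1 :> nat) (i2E : i2 = 2 :> nat)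
  (i3E : i3 = 3 :> nat).

Lemma sum_H2_weight : \sum_i \sum_j \sum_k H2_weight i j k =
  x i0 * pair_sum x (fun l => 1 <= l)%N
  + x i1 * (pair_sum x (fun l => 2 <= l)%N - pair_sum x (fun l => l \in D))
  + x i2 * x i3 * \sum_(k in D) x k.
Proof.
have factor (a : 'I_n -> R) (b : 'I_n -> 'I_n -> R) :
    \sum_i \sum_j \sum_k a i * b j k = (\sum_i a i) * \sum_j \sum_k b j k.
  rewrite big_distrl; apply: eq_bigr => i _ /=; rewrite big_distrr.
  by apply: eq_bigr => j _; rewrite big_distrr.
rewrite /H2_weight; under eq_bigr => i _ do under eq_bigr => j _ do rewrite !big_split.
under eq_bigr => i _ do rewrite !big_split; rewrite !big_split /= !factor.
under eq_bigr => i _ do under eq_bigr => j _ do under eq_bigr => k _ do rewrite -mulrA.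
rewrite factor -big_distrlr /= -!mulrA.
rewrite (sum_restr_at i0E) (sum_restr_at i1E) (sum_restr_at i2E) (sum_restr_at i3E).
rewrite sum_restr /pair_sum -sumrB; congr (_ + x i1 * _ + _).
by apply: eq_bigr => j _; rewrite sumrB.
Qed.

End H2Weight.

Section H2Bound.
Variables (R : rcfType) (n : nat) (D : {set 'I_n}) (x : 'I_n -> R).
Hypotheses (D_ge4 : forall i, i \in D -> (4 <= i)%N) (x_ge0 : forall i, 0 <= x i)
  (x_sum1 : \sum_i x i = 1).
Variables (i0 i1 i2 i3 : 'I_n).
Hypotheses (i0E : i0 = 0 :> nat) (i1E : i1 = 1 :> nat) (i2E : i2 = 2 :> nat)
  (i3E : i3 = 3 :> nat).

Lemma lagr_H2_le_sqrt3_div18 : lagr_val (H2 D) x <= Num.sqrt 3 / 18.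
Proof.
apply: le_trans (lagr_H2_le_weights D_ge4 x_ge0) _.
rewrite (sum_H2_weight _ _ i0E i1E i2E i3E).
have D_sub_ge4 : {subset (fun l => l \in D) <= (fun l : 'I_n => 4 <= l)%N} by [].
have sq_ge0 j : 0 <= x j ^+ 2 by exact: sqr_ge0.
apply: (@H2_weights_bound R (x i0) (x i1) (x i2) (x i3) (\sum_(k in D) x k)
  (\sum_(j : 'I_n | (2 <= j)%N) x j) (\sum_(j : 'I_n | (4 <= j)%N) x j ^+ 2)
  (\sum_(j in D) x j ^+ 2)).
1-4: exact: x_ge0.
- exact: sumr_ge0.
- exact: ler_sum_subset.
- exact: sumr_ge0.
- rewrite (sum_from_split x i2E) (sum_from_split x i3E) addrA lerD2l.
  exact: ler_sum_subset.
- rewrite -x_sum1 [RHS](eq_bigl (fun j : 'I_n => 0 <= j)%N) //.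
  by rewrite [RHS](sum_from_split x i0E) (sum_from_split x i1E) addrA.
- by rewrite pair_sum_sqr (sum_from_split x i1E) (sum_from_split (fun j => x j ^+ 2) i1E)
    (sum_from_split (fun j => x j ^+ 2) i2E) (sum_from_split (fun j => x j ^+ 2) i3E).
- by rewrite pair_sum_sqr (sum_from_split (fun j => x j ^+ 2) i2E)
    (sum_from_split (fun j => x j ^+ 2) i3E).
- exact: pair_sum_sqr.
Qed.

End H2Bound.

Theorem lemma4p11 (R : rcfType) (n : nat) (D : {set 'I_n}) :
  (6 <= n)%N ->
  (forall i, i \in D -> (4 < lab i)%N) ->
  (2 <= #|D|)%N ->
  forall x : 'I_n -> R, in_simplex x ->
    lagr_val (H2 D) x <= Num.sqrt 3 / 18.
Proof.
move=> n_ge6 D_gt4 _ x [x_ge0 x_sum1].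
have D_ge4 i : i \in D -> (4 <= i)%N by move/D_gt4; rewrite labE.
have [n0 n1 n2 n3] : [/\ 0 < n, 1 < n, 2 < n & 3 < n]%N by split; lia.
exact: (lagr_H2_le_sqrt3_div18 D_ge4 x_ge0 x_sum1 (i0 := Ordinal n0) (i1 := Ordinal n1)
  (i2 := Ordinal n2) (i3 := Ordinal n3)).
Qed.
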